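(* Let $\pi=(O,h)$ be the complete prefix unfolding of a bounded net system and let $e_1,e_2$ be events of $\pi$. If $e_1\triangleright e_2$, then $e_1<_{ear}e_2$.
   Context: Occurrence net $O=(C,E,G)$ (conditions $C$, events $E$); $x<y$ iff there is a directed path with at least one arc from $x$ to $y$. For a set of nodes $Y$, $\bullet Y=\bigcup_{y\in Y}\bullet y$; thus $\bullet(\bullet e)$ is the set of events having an output condition in the preset of $e$. For a set of events $E_0$, $Max(E_0)=\{e\in E_0\mid\forall e'\in E_0:e\not<e'\}$. Max-Event Adjacency: for events $e_1<e_2$, $e_1\triangleright e_2$ iff $e_1\in Max(\bullet(\bullet e_2))$. A bounded net system is one whose reachable markings are uniformly bounded; $\pi=(O,h)$ is its complete prefix unfolding in the sense of McMillan/Esparza ($h$ maps conditions to places and events to transitions; the prefix is the greatest backward closed subnet of the unfolding containing no events after a cut-off event). The prefix is viewed as a net whose initial marking marks exactly the minimal conditions; its reachable markings are the sets $Cut(\mathcal C)=(Min(O)\cup\mathcal C\bullet)\setminus\bullet\mathcal C$ for configurations $\mathcal C$ (conflict-free backward closed sets of events). Event adjacency relation: $e_1<_{ear}e_2$ iff there exist reachable markings $M_1,M_1',M_2,M_2'$ of $\pi$ with $M_1\xrightarrow{e_1}M_1'$, $M_2\xrightarrow{e_2}M_2'$ and $h(M_2)=h(M_1')$. *)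

(* the occurrence net
   (unfolding) lives in arbitrary, possibly infinite, Types. *)
From Stdlib Require List.
From Stdlib Require Import Relations.Relation_Operators.
From HB Require Import structures.
From mathcomp Require Import all_boot.

Set Implicit Arguments.
Unset Strict Implicit.
Unset Printing Implicit Defensive.

Definition has_card (T : Type) (A : T -> Prop) (n : nat) : Prop :=
  exists l : list T, List.NoDup l /\ (forall x, List.In x l <-> A x)
                     /\ List.length l = n.

Record netsys := NetSys {
  place : finType;
  trans : finType;
  npre  : place -> trans -> bool;
  npost : trans -> place -> bool;
  m0    : place -> nat
}.

Definition nmarking (N : netsys) := place N -> nat.

Definition nenabled (N : netsys) (M : nmarking N) (t : trans N) : Prop :=
  forall p, npre p t -> 0 < M p.

Definition nfire (N : netsys) (M : nmarking N) (t : trans N) : nmarking N :=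
  fun p => M p - npre p t + npost t p.

Inductive nreachable (N : netsys) : nmarking N -> Prop :=
| nreach0 : nreachable (@m0 N)
| nreachS (M : nmarking N) (t : trans N) :
    nreachable M -> nenabled M t -> nreachable (nfire M t).

Definition bounded (N : netsys) : Prop :=
  exists k, forall M : nmarking N, nreachable M -> forall p, M p <= k.

Record pnet := PNet {
  cnd   : Type;
  evt   : Type;
  ipre  : evt -> cnd -> Prop;   (* c \in pre-set of e  (arc c -> e) *)
  ipost : evt -> cnd -> Prop    (* c \in post-set of e (arc e -> c) *)
}.

Definition node (O : pnet) := (cnd O + evt O)%type.

Inductive flow (O : pnet) : node O -> node O -> Prop :=
| flow_ce (c : cnd O) (e : evt O) : ipre e c -> flow (inl c) (inr e)
| flow_ec (e : evt O) (c : cnd O) : ipost e c -> flow (inr e) (inl c).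

Definition nlt (O : pnet) : node O -> node O -> Prop :=
  clos_trans (node O) (@flow O).

Definition nle (O : pnet) (x y : node O) : Prop := x = y \/ nlt x y.

Definition conflict (O : pnet) (x y : node O) : Prop :=
  exists (e1 e2 : evt O) (c : cnd O),
    e1 <> e2 /\ ipre e1 c /\ ipre e2 c /\ nle (inr e1) x /\ nle (inr e2) y.

Definition concurrent (O : pnet) (x y : node O) : Prop :=
  ~ nlt x y /\ ~ nlt y x /\ ~ conflict x y.

Definition occurrence_net (O : pnet) : Prop :=
  (forall (c : cnd O) (e1 e2 : evt O), ipost e1 c -> ipost e2 c -> e1 = e2) /\
  (forall x : node O, ~ nlt x x) /\
  (forall x : node O, exists l : list (node O), forall y, nlt y x -> List.In y l) /\
  (forall x : node O, ~ conflict x x).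

Definition minc (O : pnet) (c : cnd O) : Prop := forall e : evt O, ~ ipost e c.

Definition is_branching_process (N : netsys) (O : pnet)
    (hc : cnd O -> place N) (he : evt O -> trans N) : Prop :=
  occurrence_net O /\
  (* h restricted to Min(O) is a bijection onto the initial marking *)
  (forall p, has_card (fun c => minc c /\ hc c = p) (@m0 N p)) /\
  (* h restricted to the pre-set / post-set of e is a bijection onto that of h(e) *)
  (forall e p, npre p (he e) <-> exists c, ipre e c /\ hc c = p) /\
  (forall e c1 c2, ipre e c1 -> ipre e c2 -> hc c1 = hc c2 -> c1 = c2) /\
  (forall e p, npost (he e) p <-> exists c, ipost e c /\ hc c = p) /\
  (forall e c1 c2, ipost e c1 -> ipost e c2 -> hc c1 = hc c2 -> c1 = c2) /\
  (forall e1 e2, (forall c, ipre e1 c <-> ipre e2 c) -> he e1 = he e2 -> e1 = e2).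

(* The unfolding: the (up to isomorphism unique) branching process in which
   every possible extension is already present. *)
Definition is_unfolding (N : netsys) (O : pnet)
    (hc : cnd O -> place N) (he : evt O -> trans N) : Prop :=
  is_branching_process hc he /\
  forall (t : trans N) (X : cnd O -> Prop),
    (forall c1 c2, X c1 -> X c2 -> c1 <> c2 -> concurrent (inl c1) (inl c2)) ->
    (forall p, npre p t <-> exists c, X c /\ hc c = p) ->
    (forall c1 c2, X c1 -> X c2 -> hc c1 = hc c2 -> c1 = c2) ->
    exists e, he e = t /\ forall c, ipre e c <-> X c.

Definition configuration (O : pnet) (C : evt O -> Prop) : Prop :=
  (forall e e', C e -> nlt (inr e') (inr e) -> C e') /\
  (forall e e', C e -> C e' -> ~ conflict (inr e) (inr e')).

Definition cut (O : pnet) (C : evt O -> Prop) : cnd O -> Prop :=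
  fun c => (minc c \/ exists e, C e /\ ipost e c) /\ ~ (exists e, C e /\ ipre e c).

Definition loc (O : pnet) (e : evt O) : evt O -> Prop :=
  fun e' => nle (inr e') (inr e).

(* h(M) = h(M') as multisets of places *)
Definition same_mark (N : netsys) (O : pnet) (hc : cnd O -> place N)
    (M M' : cnd O -> Prop) : Prop :=
  forall p n, has_card (fun c => M c /\ hc c = p) n <->
              has_card (fun c => M' c /\ hc c = p) n.

(* McMillan cut-off events (size-based adequate order) *)
Definition cutoff (N : netsys) (O : pnet) (hc : cnd O -> place N) (e : evt O) : Prop :=
  exists e' : evt O,
    same_mark hc (cut (loc e')) (cut (loc e)) /\
    exists n' n, has_card (loc e') n' /\ has_card (loc e) n /\ n' < n.

(* ---------- The complete prefix: greatest backward closed subnet of the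
   unfolding containing no event after a cut-off event ---------- *)
Definition in_prefix_ev (N : netsys) (O : pnet) (hc : cnd O -> place N)
    (e : evt O) : Prop :=
  forall e', cutoff hc e' -> ~ nlt (inr e') (inr e).

Definition in_prefix_cnd (N : netsys) (O : pnet) (hc : cnd O -> place N)
    (c : cnd O) : Prop :=
  forall e', nlt (inr e') (inl c) -> in_prefix_ev hc e'.

Definition prefix_configuration (N : netsys) (O : pnet) (hc : cnd O -> place N)
    (C : evt O -> Prop) : Prop :=
  configuration C /\ forall e, C e -> in_prefix_ev hc e.

Definition pf_reachable (N : netsys) (O : pnet) (hc : cnd O -> place N)
    (M : cnd O -> Prop) : Prop :=
  exists C, prefix_configuration hc C /\ forall c, M c <-> cut C c.

Definition pf_fire (N : netsys) (O : pnet) (hc : cnd O -> place N)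
    (M : cnd O -> Prop) (e : evt O) (M' : cnd O -> Prop) : Prop :=
  in_prefix_ev hc e /\
  (forall c, ipre e c -> M c) /\
  (forall c, M' c <-> (M c /\ ~ ipre e c) \/ ipost e c).

Definition ear (N : netsys) (O : pnet) (hc : cnd O -> place N) (e1 e2 : evt O) : Prop :=
  exists M1 M1' M2 M2' : cnd O -> Prop,
    pf_reachable hc M1 /\ pf_reachable hc M1' /\
    pf_reachable hc M2 /\ pf_reachable hc M2' /\
    pf_fire hc M1 e1 M1' /\ pf_fire hc M2 e2 M2' /\
    same_mark hc M2 M1'.

Definition pre_pre (O : pnet) (e e' : evt O) : Prop :=
  exists c, ipre e c /\ ipost e' c.

Definition max_adj (O : pnet) (e1 e2 : evt O) : Prop :=
  nlt (inr e1) (inr e2) /\ pre_pre e2 e1 /\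
  forall e', pre_pre e2 e' -> ~ nlt (inr e1) (inr e').

From mathcomp Require Import all_boot.
From Stdlib Require Import Relations.Relation_Operators Relations.Operators_Properties Classical.

Set Implicit Arguments.
Unset Strict Implicit.

(* Let [e2) be the strict past of e2. Since e1 is maximal in ••e2, it is
   maximal in [e2), so [e2) \ {e1}, [e2) and [e2] are configurations of the
   prefix, and firing e1 leads from Cut([e2) \ {e1}) to Cut([e2)), from which
   e2 fires to Cut([e2]). The marking reached by e1 is the one e2 fires from. *)

Section OccurrenceNet.

Variable O : pnet.

Definition del_ev (C : evt O -> Prop) (f : evt O) : evt O -> Prop :=
  fun e => C e /\ e <> f.

Lemma nle_trans (x y z : node O) : nle x y -> nle y z -> nle x z.
Proof.
  intros [->|Hxy] [->|Hyz]; [left|right|right|right]; auto.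
  eapply t_trans; eauto.
Qed.

Lemma nlt_le_trans (x y z : node O) : nlt x y -> nle y z -> nlt x z.
Proof. intros Hxy [<-|Hyz]; [exact Hxy|eapply t_trans; eauto]. Qed.

Lemma nlt_post_pre (e e' : evt O) (c : cnd O) :
  ipost e c -> ipre e' c -> nlt (inr e) (inr e').
Proof.
  intros Hpost Hpre.
  eapply t_trans; apply t_step; [apply flow_ec|apply flow_ce]; eauto.
Qed.

(* The last arc of a path into e2 leaves a condition of •e2. *)
Lemma nlt_pre_pre (e e2 : evt O) :
  nlt (inr e) (inr e2) -> exists e', pre_pre e2 e' /\ nle (inr e) (inr e').
Proof.
  intro Hlt. apply clos_trans_tn1_iff in Hlt.
  inversion Hlt as [? Hf|y ? Hf Hpath]; subst; inversion Hf as [c ? Hc|]; subst.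
  inversion Hpath as [? Hf'|y' ? Hf' Hpath']; subst;
    inversion Hf' as [|e' ? Hpost]; subst.
  - exists e; split; [exists c; auto|left; reflexivity].
  - exists e'; split; [exists c; auto|right; apply clos_trans_tn1_iff; exact Hpath'].
Qed.

Lemma max_adj_no_between (e1 e2 e : evt O) :
  max_adj e1 e2 -> nlt (inr e1) (inr e) -> ~ nlt (inr e) (inr e2).
Proof.
  intros [_ [_ Hmax]] H1e He2.
  destruct (nlt_pre_pre He2) as [e' [Hpp Hle]].
  exact (Hmax e' Hpp (nlt_le_trans H1e Hle)).
Qed.

Hypothesis nlt_irrefl : forall x : node O, ~ nlt x x.

Lemma configuration_loc (e : evt O) :
  ~ conflict (inr e) (inr e) -> configuration (loc e).
Proof.
  intros Hnc. split.
  - intros e' e'' He' Hlt. right. exact (nlt_le_trans Hlt He').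
  - intros a b Ha Hb [x [y [c [Hxy [Hx [Hy [Hxa Hyb]]]]]]].
    apply Hnc. exists x, y, c; repeat split; auto; eapply nle_trans; eauto.
Qed.

Lemma configuration_del_max (C : evt O -> Prop) (f : evt O) :
  configuration C -> (forall e, C e -> ~ nlt (inr f) (inr e)) ->
  configuration (del_ev C f).
Proof.
  intros [Hclosed Hcf] Hmax. split.
  - intros e e' [He Hef] Hlt. split; [exact (Hclosed e e' He Hlt)|].
    intros ->. exact (Hmax e He Hlt).
  - intros e e' [He _] [He' _]. exact (Hcf e e' He He').
Qed.

Lemma cut_fire_max (C : evt O -> Prop) (f : evt O) :
  configuration C -> C f -> (forall e, C e -> ~ nlt (inr f) (inr e)) ->
  (forall c, ipre f c -> cut (del_ev C f) c) /\
  (forall c, cut C c <-> (cut (del_ev C f) c /\ ~ ipre f c) \/ ipost f c).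
Proof.
  intros [Hclosed Hcf] Hf Hmax.
  assert (Hconsumer : forall e c, C e -> e <> f -> ipre e c -> ~ ipre f c).
  { intros e c He Hef Hpe Hpf. apply (Hcf e f He Hf).
    exists e, f, c; repeat split; auto; left; reflexivity. }
  split.
  - intros c Hpf. split.
    + destruct (classic (minc c)) as [Hmin|Hnmin]; [left; exact Hmin|right].
      apply not_all_not_ex in Hnmin as [e He].
      exists e; split; [split|exact He].
      * exact (Hclosed f e Hf (nlt_post_pre He Hpf)).
      * intros ->. exact (nlt_irrefl (nlt_post_pre He Hpf)).
    + intros [e [[He Hef] Hpe]]. exact (Hconsumer e c He Hef Hpe Hpf).
  - intro c. split.
    + intros [Hprod Hunused].
      destruct (classic (ipost f c)) as [Hpost|Hnpost]; [right; exact Hpost|left].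
      split; [split|].
      * destruct Hprod as [Hmin|[e [He Hpe]]]; [left; exact Hmin|right].
        exists e; repeat split; auto. intros ->. contradiction.
      * intros [e [[He _] Hpe]]. apply Hunused; eauto.
      * intro Hpf. apply Hunused; eauto.
    + intros [[[Hprod Hunused] Hnpf]|Hpost]; split.
      * destruct Hprod as [Hmin|[e [[He _] Hpe]]]; [left; exact Hmin|right; eauto].
      * intros [e [He Hpe]]. destruct (classic (e = f)) as [->|Hef].
        -- contradiction.
        -- apply Hunused. exists e; repeat split; auto.
      * right; eauto.
      * intros [e [He Hpe]]. exact (Hmax e He (nlt_post_pre Hpost Hpe)).
Qed.

End OccurrenceNet.

Section Prefix.

Variables (N : netsys) (O : pnet) (hc : cnd O -> place N).

Lemma in_prefix_ev_le (e e' : evt O) :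
  nle (inr e') (inr e) -> in_prefix_ev hc e -> in_prefix_ev hc e'.
Proof. intros Hle He c Hc Hlt. exact (He c Hc (nlt_le_trans Hlt Hle)). Qed.

Lemma prefix_configuration_sub_loc (C : evt O -> Prop) (e : evt O) :
  in_prefix_ev hc e -> configuration C -> (forall e', C e' -> loc e e') ->
  prefix_configuration hc C.
Proof.
  intros He HC Hsub. split; [exact HC|].
  intros e' He'. exact (in_prefix_ev_le (Hsub e' He') He).
Qed.

Lemma pf_reachable_cut (C : evt O -> Prop) :
  prefix_configuration hc C -> pf_reachable hc (cut C).
Proof. intro HC. exists C; split; [exact HC|tauto]. Qed.

Lemma same_mark_refl (M : cnd O -> Prop) : same_mark hc M M.
Proof. intros p n; reflexivity. Qed.

End Prefix.

Theorem proposition5 (N : netsys) (O : pnet)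
    (hc : cnd O -> place N) (he : evt O -> trans N) :
  bounded N -> is_unfolding hc he ->
  forall e1 e2 : evt O,
    in_prefix_ev hc e1 -> in_prefix_ev hc e2 ->
    max_adj e1 e2 -> ear hc e1 e2.
Proof.
  intros _ [[[_ [Hirr [_ Hnc]]] _] _] e1 e2 Hp1 Hp2 Hadj.
  set C3 := loc e2.
  set C2 := del_ev C3 e2.
  set C1 := del_ev C2 e1.
  have Hmax3 : forall e, C3 e -> ~ nlt (inr e2) (inr e).
  { intros e He Hlt. exact (Hirr _ (nlt_le_trans Hlt He)). }
  have Hmax2 : forall e, C2 e -> ~ nlt (inr e1) (inr e).
  { intros e [[He|He] Hne] Hlt; [congruence|exact (max_adj_no_between Hadj Hlt He)]. }
  have He1 : C2 e1.
  { split; [right; exact (proj1 Hadj)|intros ->; exact (Hirr _ (proj1 Hadj))]. }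
  have Cf3 := configuration_loc (Hnc (inr e2)).
  have Cf2 := configuration_del_max Cf3 Hmax3.
  have Cf1 := configuration_del_max Cf2 Hmax2.
  have He2 : C3 e2 by left; reflexivity.
  have [Fire1a Fire1b] := cut_fire_max Hirr Cf2 He1 Hmax2.
  have [Fire2a Fire2b] := cut_fire_max Hirr Cf3 He2 Hmax3.
  have Hpf := prefix_configuration_sub_loc Hp2.
  have R1 : pf_reachable hc (cut C1) by apply pf_reachable_cut, Hpf; firstorder.
  have R2 : pf_reachable hc (cut C2) by apply pf_reachable_cut, Hpf; firstorder.
  have R3 : pf_reachable hc (cut C3) by apply pf_reachable_cut, Hpf.
  exists (cut C1), (cut C2), (cut C2), (cut C3).
  split; [exact R1|split; [exact R2|split; [exact R2|split; [exact R3|]]]].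
  split; [by split; [|split]|split; [by split; [|split]|exact: same_mark_refl]].
Qed.
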